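(* Consider the real linear measurement model $\bm{y}=\bm{A}\bm{x}+\bm{w}$ with $\bm{A}\in\mathbb{R}^{m\times n}$ having i.i.d. entries $\mathcal{N}(0,1/m)$, $\bm{x}\in\mathbb{R}^n$ having i.i.d. entries drawn from the least-favorable distribution $$p_x=\tfrac{\epsilon}{2}\Delta_{x=-\mu}+(1-\epsilon)\Delta_{x=0}+\tfrac{\epsilon}{2}\Delta_{x=\mu},\qquad \epsilon\in(0,1],$$ in the limit $\mu\to\infty$, and $\bm{w}$ additive white Gaussian noise with i.i.d. entries $\mathcal{N}(0,\sigma_w^2)$ where $\sigma_w^2=\delta\sigma_0^2$, $\delta=m/n$, and $\sigma_0^2>0$ is a constant. Apply the AMP algorithm with the soft-thresholding estimator and optimally tuned threshold (described in the context). Then, asymptotically ($m,n\to\infty$ with $m/n\to\delta$), the number of measurements that minimizes the MSE is $$\delta^{\dagger}=2M(\epsilon,\alpha^{\dagger}),$$ which is independent of the noise variance (i.e. of $\sigma_0^2$).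
   Context: AMP iterates $\bm{x}^{t+1}=\eta(\bm{A}^{T}\bm{r}^{t}+\bm{x}^{t})$, $\bm{r}^{t}=\bm{y}-\bm{A}\bm{x}^{t}+\frac{1}{\delta}\langle\eta'(\bm{A}^{T}\bm{r}^{t-1}+\bm{x}^{t-1})\rangle\bm{r}^{t-1}$ (with $\langle\bm v\rangle=\frac1n\sum_i v_i$, $\bm r^0=\bm y$, $\bm x^0=\bm 0$), where $\eta$ is componentwise soft thresholding $\eta(\beta,\lambda)=\mathrm{sign}(\beta)\max(|\beta|-\lambda,0)$ with threshold $\lambda^t=\alpha^{\dagger}\sigma_e^t$. Its asymptotic performance is described by state evolution: $(\sigma_e^{t+1})^2=\frac{1}{\delta}\mathrm{Err}_{t+1}+\sigma_w^2$, with $\mathrm{Err}_{t+1}=M(\epsilon,\alpha^\dagger)(\sigma_e^t)^2$ in the limit $\mu\to\infty$, where $$M(\epsilon,\alpha)=\epsilon(1+\alpha^2)+(1-\epsilon)\left[2(1+\alpha^2)\Phi(-\alpha)-2\alpha\phi(\alpha)\right],$$ $\phi$ and $\Phi$ are the standard Gaussian density and CDF, and $\alpha^{\dagger}=\arg\min_{\alpha\ge 0}M(\epsilon,\alpha)$. AMP is assumed to converge, i.e. the state evolution reaches a fixed point $\sigma_e^\infty$, and the MSE is $\mathrm{Err}=\lim_{n\to\infty}\frac1n\mathbb{E}\|\bm{x}-\hat{\bm x}\|^2$, given by the fixed-point value $\mathrm{Err}_\infty$ of the state evolution (considered as a function of $\delta$ over the range $\delta>M(\epsilon,\alpha^\dagger)$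 where it is positive). *)

From Stdlib Require Import Reals.
From Coquelicot Require Import Coquelicot.
Open Scope R_scope.

Definition phi (x : R) : R := exp (- x ^ 2 / 2) / sqrt (2 * PI).

Definition Phi (x : R) : R :=
  RInt_gen phi (Rbar_locally m_infty) (at_point x).

Definition Mfun (eps alpha : R) : R :=
  eps * (1 + alpha ^ 2)
  + (1 - eps) * (2 * (1 + alpha ^ 2) * Phi (- alpha) - 2 * alpha * phi alpha).

Definition is_opt_threshold (eps adag : R) : Prop :=
  0 <= adag /\ forall alpha, 0 <= alpha -> Mfun eps adag <= Mfun eps alpha.

(* State evolution (mu -> oo), sigma_w^2 = delta * sigma0^2:
   (sigma_e^{t+1})^2 = (1/delta) * Err_{t+1} + sigma_w^2, Err_{t+1} = M (sigma_e^t)^2.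
   A fixed point s = (sigma_e^oo)^2 > 0 gives the MSE Err_oo = M * s. *)
Definition SE_fixed_point (Mv delta sigma0sq s : R) : Prop :=
  0 < s /\ s = / delta * (Mv * s) + delta * sigma0sq.

Definition is_AMP_MSE (Mv sigma0sq : R) (Err : R -> R) : Prop :=
  forall delta, Mv < delta ->
    exists s, SE_fixed_point Mv delta sigma0sq s /\ Err delta = Mv * s.

(** The state-evolution fixed point is explicit: [s = delta^2 sigma0^2 / (delta - M)], so
    the MSE is [Err delta = M sigma0^2 delta^2 / (delta - M)], and
    [delta^2 / (delta - M) - 4 M = (delta - 2 M)^2 / (delta - M)] shows that it is
    strictly minimal at [delta = 2 M], whatever [sigma0^2].  This needs [M > 0], which
    holds for every threshold [a >= 0] because
    [(1 + a^2) Phi(-a) >= a phi(a)]; that Gaussian tail bound integrates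
    [((t + 2a) phi(t))' = phi(t) (1 - 2at - t^2) <= (1 + a^2) phi(t)]. *)

From Stdlib Require Import Reals Lra Psatz.
From Coquelicot Require Import Coquelicot.
Open Scope R_scope.

Section ImproperIntegralNonneg.

Variable f : R -> R.
Hypothesis f_ge0 : forall t, 0 <= f t.
Hypothesis ex_RInt_f : forall a b, ex_RInt f a b.

Lemma RInt_ge0_antimono_left (a a' x : R) : a <= a' -> a' <= x -> RInt f a' x <= RInt f a x.
Proof.
  intros Haa' Ha'x.
  rewrite <- (RInt_Chasles f a a' x) by apply ex_RInt_f.
  assert (0 <= RInt f a a') by (apply RInt_ge_0; auto).
  unfold plus; simpl; lra.
Qed.

Lemma is_RInt_gen_m_infty_ge0 (x B : R) :
  (forall a, a <= x -> RInt f a x <= B) ->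
  exists L, is_RInt_gen f (Rbar_locally m_infty) (at_point x) L /\
            forall a, a <= x -> RInt f a x <= L.
Proof.
  intros HB.
  set (u := fun n => RInt f (x - INR n) x).
  assert (Hu_incr : forall n, u n <= u (S n)).
  { intro n; apply RInt_ge0_antimono_left; rewrite ?S_INR; generalize (pos_INR n); lra. }
  assert (Hu_bnd : forall n, u n <= B).
  { intro n; apply HB; generalize (pos_INR n); lra. }
  destruct (ex_finite_lim_seq_incr u B Hu_incr Hu_bnd) as [L HL].
  assert (Hu_le : forall n, u n <= L) by exact (is_lim_seq_incr_compare u L HL Hu_incr).
  assert (HRInt_le : forall a, a <= x -> RInt f a x <= L).
  { intros a Ha.
    destruct (nfloor_ex (x - a)) as [n Hn]; [lra |].
    apply Rle_trans with (u (S n)); [| apply Hu_le].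
    apply RInt_ge0_antimono_left; rewrite ?S_INR; lra. }
  exists L; split; [| exact HRInt_le].
  intros P [e HP].
  destruct (proj2 (is_lim_seq_spec u L) HL e) as [N HN].
  exists (fun a => a < x - INR N) (fun b => b = x).
  - exists (x - INR N); auto.
  - reflexivity.
  - intros a b Ha ->.
    exists (RInt f a x); split; [apply (@RInt_correct R_CompleteNormedModule), ex_RInt_f |].
    apply HP.
    assert (u N <= RInt f a x) by (apply RInt_ge0_antimono_left; generalize (pos_INR N); lra).
    assert (RInt f a x <= L) by (apply HRInt_le; generalize (pos_INR N); lra).
    specialize (HN N (Nat.le_refl N)).
    change (Rabs (RInt f a x - L) < e).
    apply Rabs_def1; apply Rabs_def2 in HN; lra.
Qed.

End ImproperIntegralNonneg.

Lemma sqrt_2PI_pos : 0 < sqrt (2 * PI).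
Proof. apply sqrt_lt_R0; generalize PI_RGT_0; lra. Qed.

Lemma phi_pos (x : R) : 0 < phi x.
Proof. apply Rdiv_lt_0_compat; [apply exp_pos | apply sqrt_2PI_pos]. Qed.

Lemma phiN (x : R) : phi (- x) = phi x.
Proof. unfold phi; replace ((- x) ^ 2) with (x ^ 2) by ring; reflexivity. Qed.

Lemma is_derive_phi (x : R) : is_derive phi x (- x * phi x).
Proof.
  generalize sqrt_2PI_pos; intro Hc.
  unfold phi; auto_derive; [auto |].
  replace (- (x * (x * 1)) * / 2) with (- x ^ 2 / 2) by field.
  field; lra.
Qed.

Lemma continuous_phi (x : R) : continuous phi x.
Proof. apply (@ex_derive_continuous R_AbsRing R_NormedModule); eexists; apply is_derive_phi. Qed.

Lemma ex_RInt_phi (a b : R) : ex_RInt phi a b.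
Proof. apply (@ex_RInt_continuous R_CompleteNormedModule); intros; apply continuous_phi. Qed.

(* [exp (-t^2/2) <= exp (t + 1/2)] since [(t + 1)^2 >= 0]. *)
Lemma RInt_phi_le_exp (a x : R) : a <= x -> RInt phi a x <= exp (x + /2) / sqrt (2 * PI).
Proof.
  intros Hax; generalize sqrt_2PI_pos; intro Hc.
  set (E := fun t => exp (t + /2) / sqrt (2 * PI)).
  assert (HE : is_RInt E a x (minus (E x) (E a))).
  { apply (@is_RInt_derive R_CompleteNormedModule).
    - intros t _; unfold E; auto_derive; [auto | field; lra].
    - intros t _; unfold E; apply (@ex_derive_continuous R_AbsRing R_NormedModule).
      auto_derive; auto. }
  apply Rle_trans with (RInt E a x).
  - apply RInt_le; [exact Hax | apply ex_RInt_phi | eexists; exact HE |].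
    intros t _; unfold phi, E, Rdiv.
    apply Rmult_le_compat_r; [left; apply Rinv_0_lt_compat; exact Hc |].
    assert (Hexpo : - t ^ 2 * / 2 <= t + /2) by (generalize (pow2_ge_0 (t + 1)); simpl; nra).
    destruct Hexpo as [Hlt | Heq];
      [left; apply exp_increasing, Hlt | right; rewrite Heq; reflexivity].
  - rewrite (is_RInt_unique E a x _ HE).
    assert (0 < E a) by (apply Rdiv_lt_0_compat; [apply exp_pos | exact Hc]).
    unfold minus, plus, opp, E in *; simpl; lra.
Qed.

Lemma RInt_phi_le_Phi (a x : R) : a <= x -> RInt phi a x <= Phi x.
Proof.
  destruct (is_RInt_gen_m_infty_ge0 phi (fun t => Rlt_le _ _ (phi_pos t)) ex_RInt_phi x
              _ (fun a => RInt_phi_le_exp a x)) as [L [HL Hle]].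
  unfold Phi; rewrite (is_RInt_gen_unique _ _ HL); apply Hle.
Qed.

Lemma is_RInt_phi_quadratic (a b : R) :
  is_RInt (fun t => phi t * (1 - 2 * a * t - t ^ 2)) b (- a)
          (a * phi a - (b + 2 * a) * phi b).
Proof.
  generalize sqrt_2PI_pos; intro Hc.
  replace (a * phi a - (b + 2 * a) * phi b)
    with (minus ((- a + 2 * a) * phi (- a)) ((b + 2 * a) * phi b))
    by (rewrite phiN; unfold minus, plus, opp; simpl; ring).
  apply (@is_RInt_derive R_CompleteNormedModule (fun t => (t + 2 * a) * phi t)).
  - intros t _; unfold phi; auto_derive; [auto |].
    replace (exp (- (t * (t * 1)) * / 2)) with (exp (- t ^ 2 / 2)) by (f_equal; field).
    field; lra.
  - intros t _; unfold phi; apply (@ex_derive_continuous R_AbsRing R_NormedModule).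
    auto_derive; auto.
Qed.

Lemma phi_le_RInt_phi_tail (a b : R) : 0 <= a -> b <= - 2 * a ->
  a * phi a <= (1 + a ^ 2) * RInt phi b (- a).
Proof.
  intros Ha Hb.
  assert (0 <= - (b + 2 * a) * phi b) by (apply Rmult_le_pos; [lra | left; apply phi_pos]).
  apply Rle_trans with (a * phi a - (b + 2 * a) * phi b); [lra |].
  apply (is_RInt_le (fun t => phi t * (1 - 2 * a * t - t ^ 2)) (fun t => (1 + a ^ 2) * phi t)
           b (- a)).
  - lra.
  - apply is_RInt_phi_quadratic.
  - apply (@is_RInt_scal R_NormedModule), (@RInt_correct R_CompleteNormedModule), ex_RInt_phi.
  - intros t _.
    assert (0 <= phi t * (t + a) ^ 2)
      by (apply Rmult_le_pos; [left; apply phi_pos | apply pow2_ge_0]).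
    nra.
Qed.

Lemma phi_le_Phi_tail (a : R) : 0 <= a -> a * phi a <= (1 + a ^ 2) * Phi (- a).
Proof.
  intros Ha.
  apply Rle_trans with ((1 + a ^ 2) * RInt phi (- 2 * a) (- a)).
  - apply phi_le_RInt_phi_tail; lra.
  - apply Rmult_le_compat_l; [generalize (pow2_ge_0 a); lra | apply RInt_phi_le_Phi; lra].
Qed.

Lemma Mfun_gt0 (eps a : R) : 0 < eps <= 1 -> 0 <= a -> 0 < Mfun eps a.
Proof.
  intros Heps Ha.
  generalize (phi_le_Phi_tail a Ha) (pow2_ge_0 a); intros.
  unfold Mfun; nra.
Qed.

Lemma SE_fixed_point_eq (M delta sigma0sq s : R) : delta <> 0 -> delta <> M ->
  SE_fixed_point M delta sigma0sq s -> s = delta ^ 2 * sigma0sq / (delta - M).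
Proof.
  intros Hd HdM [_ Hs].
  assert (Hlin : s * delta = M * s + delta ^ 2 * sigma0sq)
    by (rewrite Hs at 1; field; exact Hd).
  apply (Rmult_eq_reg_r (delta - M)); [| lra].
  replace (delta ^ 2 * sigma0sq / (delta - M) * (delta - M)) with (delta ^ 2 * sigma0sq)
    by (field; lra).
  lra.
Qed.

Lemma is_AMP_MSE_eq (M sigma0sq : R) (Err : R -> R) (delta : R) : 0 < M < delta ->
  is_AMP_MSE M sigma0sq Err -> Err delta = M * sigma0sq * (delta ^ 2 / (delta - M)).
Proof.
  intros HM HErr.
  destruct (HErr delta (proj2 HM)) as [s [Hs ->]].
  rewrite (SE_fixed_point_eq M delta sigma0sq s) by (auto; lra).
  field; lra.
Qed.

Lemma sqr_div_sub_gt_min (M d : R) : 0 < M < d -> d <> 2 * M ->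
  (2 * M) ^ 2 / (2 * M - M) < d ^ 2 / (d - M).
Proof.
  intros HM Hd.
  assert (Hsq : 0 < (d - 2 * M) ^ 2)
    by (apply pow2_gt_0; intro; apply Hd; lra).
  apply Rlt_0_minus.
  replace (d ^ 2 / (d - M) - (2 * M) ^ 2 / (2 * M - M)) with ((d - 2 * M) ^ 2 / (d - M))
    by (field; lra).
  apply Rdiv_lt_0_compat; lra.
Qed.

Theorem theorem1 (eps sigma0sq adag : R) (Err : R -> R) :
  0 < eps <= 1 -> 0 < sigma0sq ->
  is_opt_threshold eps adag ->
  is_AMP_MSE (Mfun eps adag) sigma0sq Err ->
  Mfun eps adag < 2 * Mfun eps adag /\
  (forall delta, Mfun eps adag < delta -> delta <> 2 * Mfun eps adag ->
     Err (2 * Mfun eps adag) < Err delta).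
Proof.
  intros Heps Hsigma [Hadag _] HErr.
  assert (HM : 0 < Mfun eps adag) by (apply Mfun_gt0; assumption).
  assert (H2M : 0 < Mfun eps adag < 2 * Mfun eps adag) by lra.
  split; [apply H2M |].
  intros delta Hdelta Hne.
  rewrite (is_AMP_MSE_eq _ _ _ _ (conj HM Hdelta) HErr), (is_AMP_MSE_eq _ _ _ _ H2M HErr).
  apply Rmult_lt_compat_l; [apply Rmult_lt_0_compat; assumption |].
  apply sqr_div_sub_gt_min; [split |]; assumption.
Qed.
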